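(* Let $\widehat P$ be any transition kernel on finite $\mathcal S\times\mathcal A$, $r:\mathcal S\times\mathcal A\to[0,1]$, $n\ge2$ an integer, $s_0\in\mathcal S$, $\underline{\widehat P}=(1-\frac1n)\widehat P+\frac1n\mathbf 1e_{s_0}^\top$, and $\underline{\widehat{\mathcal T}}(h)(s)=\max_a\big(r(s,a)+\sum_{s'}\underline{\widehat P}(s'|s,a)h(s')\big)$. Suppose a policy $\pi$ satisfies one of: (i) $\pi$ is greedy with respect to $r+\underline{\widehat P}h$ for some $h$ with $\|\underline{\widehat h}^\star-h\|_{\mathrm{sp}}\le\frac1{n^2}$; (ii) $\underline{\widehat{\mathcal T}}(\underline{\widehat h}^\pi)\le\underline{\widehat h}^\pi+\underline{\widehat\rho}^\pi+\frac1{n^2}\mathbf 1$; (iii) $\underline{\widehat\rho}^\pi\ge\underline{\widehat\rho}^\star-\frac1{3n^2}\mathbf 1$ and $\|\underline{\widehat h}^\pi-\underline{\widehat h}^\star\|_\infty\le\frac1{3n^2}$. Then $\|\widehat V^\star_{1-\frac1n}-\widehat V^\pi_{1-\frac1n}\|_\infty\le\frac1n$. Furthermore, whenever $\|\widehat V^\star_{1-\frac1n}-\widehat V^\pi_{1-\frac1n}\|_\infty\le\frac1n$ holds, one has $\underline{\widehat\rho}^\pi\ge\underline{\widehat\rho}^\star-\frac1{n^2}\mathbf 1$ and $\|\underline{\widehat h}^\pi-\underline{\widehat h}^\star\|_{\mathrm{sp}}\le\frac2n$.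
   Context: $\underline{\widehat P}(s'|s,a)=(1-\frac1n)\widehat P(s'|s,a)+\frac1n\mathbb 1\{s'=s_0\}$. Policies stationary Markov, possibly randomized; a policy is greedy with respect to $x\in\mathbb R^{\mathcal S\times\mathcal A}$ if $\sum_a\pi(a|s)x(s,a)=\max_ax(s,a)$ for all $s$. $\widehat V^\pi_\gamma=(I-\gamma\widehat P_\pi)^{-1}r_\pi$, $\widehat V^\star_\gamma=\max_\pi\widehat V^\pi_\gamma$. $\underline{\widehat\rho}^\pi,\underline{\widehat h}^\pi$ are the gain $Q^\infty_\pi r_\pi$ and bias $\mathrm{C\text{-}lim}_T\sum_{t<T}(Q^t_\pi r_\pi-Q^\infty_\pi r_\pi)$ of $\pi$ with $Q=\underline{\widehat P}$ ($Q^\infty_\pi$ the Cesàro limit of $Q_\pi^t$); $\underline{\widehat\rho}^\star,\underline{\widehat h}^\star$ those of a Blackwell-optimal policy of $(\underline{\widehat P},r)$. $\|x\|_{\mathrm{sp}}=\max x-\min x$; inequalities elementwise. *)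

From HB Require Import structures.
From mathcomp Require Import all_boot all_order all_algebra.
From mathcomp Require Import all_classical all_reals all_analysis.
Set Implicit Arguments. Unset Strict Implicit. Unset Printing Implicit Defensive.
Import Order.TTheory GRing.Theory Num.Theory.
Import numFieldNormedType.Exports.
Local Open Scope classical_set_scope.
Local Open Scope ring_scope.

(* States: 'I_m.+1 ; actions: 'I_k.+1 (arbitrary nonempty finite sets).
   Kernels P s a s', rewards r s a, policies pi s a (= pi(a|s)).
   Value-type vectors are column vectors 'cV[R]_m.+1. *)
Section MDP.
Variables (R : realType) (m k : nat).
Notation St := 'I_m.+1.
Notation Ac := 'I_k.+1.

Definition is_kernel (P : St -> Ac -> St -> R) : Prop :=
  (forall s a s', 0 <= P s a s') /\ (forall s a, \sum_s' P s a s' = 1).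

Definition is_policy (pi : St -> Ac -> R) : Prop :=
  (forall s a, 0 <= pi s a) /\ (forall s, \sum_a pi s a = 1).

Definition perturb (n : nat) (s0 : St) (P : St -> Ac -> St -> R) : St -> Ac -> St -> R :=
  fun s a s' => (1 - n%:R^-1) * P s a s' + n%:R^-1 * (s' == s0)%:R.

Definition Ppi (P : St -> Ac -> St -> R) (pi : St -> Ac -> R) : 'M[R]_m.+1 :=
  \matrix_(s, s') \sum_a pi s a * P s a s'.

Definition rpi (r : St -> Ac -> R) (pi : St -> Ac -> R) : 'cV[R]_m.+1 :=
  \col_s \sum_a pi s a * r s a.

Definition Vpi (P : St -> Ac -> St -> R) (r : St -> Ac -> R) (gamma : R)
  (pi : St -> Ac -> R) : 'cV[R]_m.+1 :=
  invmx (1%:M - gamma *: Ppi P pi) *m rpi r pi.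

Definition Vstar (P : St -> Ac -> St -> R) (r : St -> Ac -> R) (gamma : R) : 'cV[R]_m.+1 :=
  \col_s sup [set (Vpi P r gamma pi) s 0 | pi in [set pi | is_policy pi]].

Definition cesaro_mean (x : nat -> R) (N : nat) : R :=
  (N.+1)%:R^-1 * \sum_(T < N.+1) x T.
Definition clim (x : nat -> R) : R := lim (cesaro_mean x @ \oo).

Definition Qinf (Q : 'M[R]_m.+1) : 'M[R]_m.+1 :=
  \matrix_(i, j) clim (fun t => (Q ^+ t) i j).

Definition gain (P : St -> Ac -> St -> R) (r : St -> Ac -> R) (pi : St -> Ac -> R)
  : 'cV[R]_m.+1 := Qinf (Ppi P pi) *m rpi r pi.

Definition bias (P : St -> Ac -> St -> R) (r : St -> Ac -> R) (pi : St -> Ac -> R)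
  : 'cV[R]_m.+1 :=
  \col_s clim (fun T => \sum_(t < T)
     ((Ppi P pi ^+ t *m rpi r pi) s 0 - (Qinf (Ppi P pi) *m rpi r pi) s 0)).

Definition blackwell_optimal (P : St -> Ac -> St -> R) (r : St -> Ac -> R)
  (pi : St -> Ac -> R) : Prop :=
  is_policy pi /\
  exists gamma0 : R, 0 <= gamma0 /\ gamma0 < 1 /\
    forall gamma, gamma0 < gamma -> gamma < 1 ->
      forall pi', is_policy pi' -> forall s, (Vpi P r gamma pi') s 0 <= (Vpi P r gamma pi) s 0.

Definition maxA (x : Ac -> R) : R := \big[Num.max/x ord0]_a x a.

Definition greedy (pi : St -> Ac -> R) (x : St -> Ac -> R) : Prop :=
  forall s, \sum_a pi s a * x s a = maxA (x s).

Definition bellman (P : St -> Ac -> St -> R) (r : St -> Ac -> R) (h : 'cV[R]_m.+1)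
  : 'cV[R]_m.+1 := \col_s maxA (fun a => r s a + \sum_s' P s a s' * h s' 0).

Definition spn (x : 'cV[R]_m.+1) : R :=
  \big[Num.max/x ord0 0]_s x s 0 - \big[Num.min/x ord0 0]_s x s 0.

Definition supn (x : 'cV[R]_m.+1) : R := \big[Num.max/0]_s `|x s 0|.

End MDP.

(* The perturbed model restarts at [s0] with probability [1/n] at every step,
   which turns average-reward quantities into discounted ones: writing [V] for the
   [(1 - 1/n)]-discounted value of a policy in the original model, its gain in the
   perturbed model is the constant [V(s0)/n] and its bias is [V] up to an additive
   constant.  Blackwell optimality of [pistar] in the perturbed model gives, by
   letting the discount tend to 1, that [pistar] is [(1 - 1/n)]-discount optimal in
   the original model, so [V^* = V^pistar].  Conditions (i) and (ii) bound a
   one-step Bellman defect by [1/n^2], which the resolvent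
   [(I - (1 - 1/n) P_pi)^-1], of norm [n], turns into [V^* - V^pi <= 1/n];
   condition (iii) and the converse are direct computations with these formulas. *)

From Pilot Require Import Defs.
From HB Require Import structures.
From mathcomp Require Import all_boot all_order all_algebra.
From mathcomp Require Import all_classical all_reals all_analysis.
From mathcomp Require Import ring lra.
Import Order.TTheory GRing.Theory Num.Theory.
Import numFieldNormedType.Exports.
Set Implicit Arguments. Unset Strict Implicit. Unset Printing Implicit Defensive.
Local Open Scope classical_set_scope.
Local Open Scope ring_scope.

Section ConvexCombination.
Variables (R : realType) (I : finType) (w : I -> R).
Hypotheses (w_ge0 : forall i, 0 <= w i) (w_sum1 : \sum_i w i = 1).

Lemma convex_comb_const c : \sum_i w i * c = c.
Proof. by rewrite -mulr_suml w_sum1 mul1r. Qed.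

Lemma convex_comb_le f c : (forall i, f i <= c) -> \sum_i w i * f i <= c.
Proof.
by move=> fc; rewrite -(convex_comb_const c) ler_sum // => i _; rewrite ler_wpM2l.
Qed.

Lemma convex_comb_ge f c : (forall i, c <= f i) -> c <= \sum_i w i * f i.
Proof.
by move=> fc; rewrite -(convex_comb_const c) ler_sum // => i _; rewrite ler_wpM2l.
Qed.

Lemma convex_combDr f c : \sum_i w i * (f i + c) = \sum_i w i * f i + c.
Proof. by under eq_bigr do rewrite mulrDr; rewrite big_split /= convex_comb_const. Qed.

End ConvexCombination.

Section StochasticMatrix.
Variables (R : realType) (m : nat).
Implicit Types (A : 'M[R]_m.+1) (x y b : 'cV[R]_m.+1).

Definition stochastic A := (forall i j, 0 <= A i j) /\ (forall i, \sum_j A i j = 1).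

Lemma cV_subE x y i : (x - y) i 0 = x i 0 - y i 0.
Proof. by rewrite !mxE. Qed.

Lemma stochastic_mulmx_le A x c i :
  stochastic A -> (forall j, x j 0 <= c) -> (A *m x) i 0 <= c.
Proof. by case=> A0 A1 xc; rewrite mxE (convex_comb_le (A0 i) (A1 i)). Qed.

Lemma stochastic_mulmx_ge A x c i :
  stochastic A -> (forall j, c <= x j 0) -> c <= (A *m x) i 0.
Proof. by case=> A0 A1 xc; rewrite mxE (convex_comb_ge (A0 i) (A1 i)). Qed.

Lemma stochastic_mulmx_homo A x y i : stochastic A ->
  (forall j, x j 0 <= y j 0) -> (A *m x) i 0 <= (A *m y) i 0.
Proof. by case=> A0 _ xy; rewrite !mxE ler_sum // => j _; rewrite ler_wpM2l. Qed.

Lemma stochastic_mulmx_shift A x y c i : stochastic A ->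
  (forall j, x j 0 = y j 0 + c) -> (A *m x) i 0 = (A *m y) i 0 + c.
Proof.
case=> _ A1 xy; rewrite !mxE -(convex_combDr (A1 i)).
by apply: eq_bigr => j _; rewrite xy.
Qed.

Lemma stochastic_pow_norm_le A x c T i :
  stochastic A -> (forall j, `|x j 0| <= c) -> `|(A ^+ T *m x) i 0| <= c.
Proof.
move=> sA xc; elim: T i => [|T IH] i; first by rewrite expr0 mul1mx.
rewrite exprS -mulmxE -mulmxA ler_norml.
apply/andP; split; [apply: (stochastic_mulmx_ge _ sA) | apply: (stochastic_mulmx_le _ sA)];
  by move=> j; have := IH j; rewrite ler_norml => /andP[].
Qed.

(* Maximum principle at a coordinate where [x] is largest. *)
Lemma discounted_ub A d c x : stochastic A -> 0 <= d -> d < 1 ->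
  (forall i, x i 0 <= d * (A *m x) i 0 + c) -> forall i, x i 0 <= c / (1 - d).
Proof.
move=> sA d0 d1 xc i.
have [j _ jmax] := @arg_maxP _ R _ ord0 xpredT (fun j => x j 0) isT.
have Axj : (A *m x) j 0 <= x j 0 by apply: (stochastic_mulmx_le _ sA) => l; apply: jmax.
rewrite ler_pdivlMr ?subr_gt0 //; apply: le_trans (_ : x j 0 * (1 - d) <= _).
  by rewrite ler_pM2r ?subr_gt0 //; apply: jmax.
by have := xc j; nra.
Qed.

Lemma discounted_lb A d c x : stochastic A -> 0 <= d -> d < 1 ->
  (forall i, d * (A *m x) i 0 + c <= x i 0) -> forall i, c / (1 - d) <= x i 0.
Proof.
move=> sA d0 d1 xc i; rewrite -lerN2 -mulNr.
have -> : - x i 0 = (- x) i 0 by rewrite mxE.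
apply: (discounted_ub sA d0 d1) => j.
by have := xc j; rewrite mulmxN !mxE; lra.
Qed.

Lemma discounted_unitmx A d : stochastic A -> 0 <= d -> d < 1 ->
  (1%:M - d *: A) \in unitmx.
Proof.
move=> sA d0 d1; rewrite unitmxE unitfE -det_tr.
apply/negP => /det0P [v /negP v_neq0 vM]; apply: v_neq0.
have v_fix i : v^T i 0 = d * (A *m v^T) i 0 + 0.
  have := congr1 (fun M => M^T i 0) vM.
  by rewrite trmx_mul trmxK mulmxBl mul1mx -scalemxAl !mxE; lra.
have v0 i : v^T i 0 = 0.
  apply/le_anti/andP; split; rewrite -(mul0r (1 - d)^-1).
    by apply: (discounted_ub sA d0 d1) => l; rewrite v_fix.
  by apply: (discounted_lb sA d0 d1) => l; rewrite -v_fix.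
by apply/eqP/rowP => j; have := v0 j; rewrite !mxE.
Qed.

Lemma discounted_resolventP A d b x : stochastic A -> 0 <= d -> d < 1 ->
  x = invmx (1%:M - d *: A) *m b <-> forall i, x i 0 = b i 0 + d * (A *m x) i 0.
Proof.
move=> sA d0 d1; have U := discounted_unitmx sA d0 d1.
suff -> : (x = invmx (1%:M - d *: A) *m b) <-> (1%:M - d *: A) *m x = b.
  split=> [<- i | xb]; first by rewrite mulmxBl mul1mx -scalemxAl !mxE; lra.
  apply/matrixP => i j; rewrite [j]ord1 mulmxBl mul1mx -scalemxAl.
  by move: (xb i); rewrite !mxE; lra.
by split=> [-> | <-]; rewrite ?mulKVmx ?mulKmx.
Qed.

End StochasticMatrix.

Section PolicyEvaluation.
Variables (R : realType) (m k : nat).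
Implicit Types (P Q : 'I_m.+1 -> 'I_k.+1 -> 'I_m.+1 -> R) (r : 'I_m.+1 -> 'I_k.+1 -> R)
  (p pi : 'I_m.+1 -> 'I_k.+1 -> R) (x h : 'cV[R]_m.+1).

Lemma rpiE r pi s : rpi r pi s 0 = \sum_a pi s a * r s a.
Proof. by rewrite mxE. Qed.

Lemma Ppi_mulmxE P pi x s :
  (Ppi P pi *m x) s 0 = \sum_a pi s a * \sum_s' P s a s' * x s' 0.
Proof.
rewrite mxE; under eq_bigr do rewrite mxE mulr_suml.
rewrite exchange_big /=; apply: eq_bigr => a _; rewrite mulr_sumr.
by apply: eq_bigr => s' _; rewrite mulrA.
Qed.

Lemma Ppi_stochastic P pi : is_kernel P -> is_policy pi -> stochastic (Ppi P pi).
Proof.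
move=> [P0 P1] [pi0 pi1]; split=> [i j | i].
  by rewrite mxE; apply: sumr_ge0 => a _; rewrite mulr_ge0.
under eq_bigr do rewrite mxE.
rewrite exchange_big /= -[RHS](pi1 i); apply: eq_bigr => a _.
by rewrite -mulr_sumr P1 mulr1.
Qed.

Lemma policy_evalE P r pi d x s : rpi r pi s 0 + d * (Ppi P pi *m x) s 0 =
  \sum_a pi s a * (r s a + d * \sum_s' P s a s' * x s' 0).
Proof.
rewrite rpiE Ppi_mulmxE mulr_sumr -big_split /=.
by apply: eq_bigr => a _; ring.
Qed.

Lemma rpi_bounds r pi : (forall s a, 0 <= r s a <= 1) -> is_policy pi ->
  forall s, 0 <= rpi r pi s 0 <= 1.
Proof.
move=> r01 [pi0 pi1] s; rewrite rpiE.
by rewrite (convex_comb_ge (pi0 s) (pi1 s)) ?(convex_comb_le (pi0 s) (pi1 s)) // => a;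
  case/andP: (r01 s a).
Qed.

Lemma maxA_ge (y : 'I_k.+1 -> R) a : y a <= Defs.maxA y.
Proof. exact: le_bigmax. Qed.

Lemma policy_eval_le_bellman Q r p x s : is_policy p ->
  rpi r p s 0 + (Ppi Q p *m x) s 0 <= bellman Q r x s 0.
Proof.
case=> p0 p1; rewrite -[X in _ + X]mul1r policy_evalE mxE.
apply: (convex_comb_le (p0 s) (p1 s)) => a; rewrite mul1r.
exact: maxA_ge.
Qed.

(* Replacing [h] by [x] changes all one-step evaluations by the same amount up to
   the span [e] of [h - x], and [pi] is optimal for [h]. *)
Lemma policy_eval_le_of_greedy Q r p pi h x e :
  is_kernel Q -> is_policy p -> is_policy pi ->
  greedy pi (fun s a => r s a + \sum_s' Q s a s' * h s' 0) ->
  (forall s t, (h s 0 - x s 0) - (h t 0 - x t 0) <= e) ->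
  forall s, rpi r p s 0 + (Ppi Q p *m x) s 0 <= rpi r pi s 0 + (Ppi Q pi *m x) s 0 + e.
Proof.
move=> kQ [p0 p1] hpi greedy_pi close s.
have [Q0 Q1] := kQ.
have Qy_le a : (Ppi Q pi *m (h - x)) s 0 <= \sum_t Q s a t * (h - x) t 0 + e.
  apply: (stochastic_mulmx_le _ (Ppi_stochastic kQ hpi)) => t.
  rewrite -lerBlDr; apply: (convex_comb_ge (Q0 s a) (Q1 s a)) => t'.
  by have := close t t'; rewrite !cV_subE; lra.
have eval_h : rpi r pi s 0 + (Ppi Q pi *m h) s 0 =
    Defs.maxA (fun a => r s a + \sum_s' Q s a s' * h s' 0).
  rewrite -greedy_pi -[X in _ + X]mul1r policy_evalE.
  by apply: eq_bigr => a _; rewrite mul1r.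
have split_h : (Ppi Q pi *m h) s 0 = (Ppi Q pi *m x) s 0 + (Ppi Q pi *m (h - x)) s 0.
  by rewrite -[in LHS](subrK x h) mulmxDr [LHS]mxE addrC.
rewrite -[X in _ + X]mul1r policy_evalE.
apply: (convex_comb_le (p0 s) (p1 s)) => a; rewrite mul1r.
have Qx : \sum_t Q s a t * x t 0 = \sum_t Q s a t * h t 0 - \sum_t Q s a t * (h - x) t 0.
  by rewrite -sumrB; apply: eq_bigr => t _; rewrite cV_subE; ring.
have := maxA_ge (fun a => r s a + \sum_s' Q s a s' * h s' 0) a.
rewrite -eval_h split_h Qx; have := Qy_le a; lra.
Qed.

Definition switch_policy p q s : 'I_m.+1 -> 'I_k.+1 -> R :=
  fun t => if t == s then p t else q t.

Lemma switch_policy_policy p q s :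
  is_policy p -> is_policy q -> is_policy (switch_policy p q s).
Proof. by move=> [p0 p1] [q0 q1]; split=> t; rewrite /switch_policy; case: eqP. Qed.

Lemma switch_policy_evalE Q r d p q s x t :
  rpi r (switch_policy p q s) t 0 + d * (Ppi Q (switch_policy p q s) *m x) t 0 =
  if t == s then rpi r p t 0 + d * (Ppi Q p *m x) t 0
  else rpi r q t 0 + d * (Ppi Q q *m x) t 0.
Proof. by rewrite !policy_evalE /switch_policy; case: eqP. Qed.

End PolicyEvaluation.

Section DiscountedValue.
Variables (R : realType) (m k : nat).
Variables (P : 'I_m.+1 -> 'I_k.+1 -> 'I_m.+1 -> R) (r : 'I_m.+1 -> 'I_k.+1 -> R).
Hypotheses (kP : is_kernel P) (r01 : forall s a, 0 <= r s a <= 1).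
Implicit Types (p pi : 'I_m.+1 -> 'I_k.+1 -> R).

Lemma Vpi_fix d pi : is_policy pi -> 0 <= d -> d < 1 -> forall s,
  Vpi P r d pi s 0 = rpi r pi s 0 + d * (Ppi P pi *m Vpi P r d pi) s 0.
Proof.
by move=> hpi d0 d1; apply/(discounted_resolventP _ _ (Ppi_stochastic kP hpi) d0 d1).
Qed.

Lemma Vpi_bounds d pi : is_policy pi -> 0 <= d -> d < 1 -> forall s,
  0 <= Vpi P r d pi s 0 <= 1 / (1 - d).
Proof.
move=> hpi d0 d1 s; have sA := Ppi_stochastic kP hpi.
apply/andP; split; last first.
  apply: (discounted_ub sA d0 d1) => t.
  by rewrite {1}(Vpi_fix hpi d0 d1 t); case/andP: (rpi_bounds r01 hpi t); lra.
rewrite -(mul0r (1 - d)^-1); apply: (discounted_lb sA d0 d1) => t.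
by rewrite [leRHS](Vpi_fix hpi d0 d1 t); case/andP: (rpi_bounds r01 hpi t); lra.
Qed.

Lemma Vpi_le_of_eval_le d pi p c : is_policy pi -> is_policy p -> 0 <= d -> d < 1 ->
  (forall s, rpi r p s 0 + d * (Ppi P p *m Vpi P r d pi) s 0 <= Vpi P r d pi s 0 + c) ->
  forall s, Vpi P r d p s 0 <= Vpi P r d pi s 0 + c / (1 - d).
Proof.
move=> hpi hp d0 d1 eval_le s; rewrite -lerBlDl -cV_subE.
apply: (discounted_ub (Ppi_stochastic kP hp) d0 d1) => t.
by rewrite mulmxBr !cV_subE (Vpi_fix hp d0 d1 t); have := eval_le t; lra.
Qed.

Lemma Vpi_ge_of_eval_ge d pi p c : is_policy pi -> is_policy p -> 0 <= d -> d < 1 ->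
  (forall s, Vpi P r d pi s 0 + c <= rpi r p s 0 + d * (Ppi P p *m Vpi P r d pi) s 0) ->
  forall s, Vpi P r d pi s 0 + c / (1 - d) <= Vpi P r d p s 0.
Proof.
move=> hpi hp d0 d1 eval_ge s; rewrite -lerBrDl -cV_subE.
apply: (discounted_lb (Ppi_stochastic kP hp) d0 d1) => t.
by rewrite mulmxBr !cV_subE (Vpi_fix hp d0 d1 t); have := eval_ge t; lra.
Qed.

(* Otherwise, switching to [p] at the single state [s] would strictly improve
   on [pistar] at [s]. *)
Lemma optimal_eval_le d pistar : is_policy pistar -> 0 <= d -> d < 1 ->
  (forall p, is_policy p -> forall s, Vpi P r d p s 0 <= Vpi P r d pistar s 0) ->
  forall p, is_policy p -> forall s,
    rpi r p s 0 + d * (Ppi P p *m Vpi P r d pistar) s 0 <= Vpi P r d pistar s 0.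
Proof.
move=> hps d0 d1 opt p hp s; rewrite leNgt; apply/negP => improving.
set Vs := Vpi P r d pistar.
have hp2 : is_policy (switch_policy p pistar s) by exact: switch_policy_policy.
set p2 := switch_policy p pistar s in hp2 *.
have Vs_le_V2 t : Vs t 0 <= Vpi P r d p2 t 0.
  rewrite -[Vs t 0]addr0 -(mul0r (1 - d)^-1).
  apply: (Vpi_ge_of_eval_ge hps hp2 d0 d1) => {}t.
  rewrite addr0 switch_policy_evalE; case: eqP => [-> | _]; first exact: ltW.
  by rewrite -(Vpi_fix hps d0 d1).
have eval_mono : (Ppi P p2 *m Vs) s 0 <= (Ppi P p2 *m Vpi P r d p2) s 0.
  exact: (stochastic_mulmx_homo _ (Ppi_stochastic kP hp2)).
have := opt p2 hp2 s; rewrite (Vpi_fix hp2 d0 d1 s).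
have := switch_policy_evalE P r d p pistar s Vs s; rewrite eqxx -/p2.
have := ler_wpM2l d0 eval_mono; lra.
Qed.

Lemma Vpi_discount_diff d d' pi : is_policy pi -> 0 <= d -> d <= d' -> d' < 1 ->
  forall s, 0 <= Vpi P r d' pi s 0 - Vpi P r d pi s 0 <= (d' - d) / (1 - d') ^+ 2.
Proof.
move=> hpi d0 dd' d'1 s.
have d1 : d < 1 by exact: le_lt_trans d'1.
have d'0 : 0 <= d' by exact: le_trans dd'.
have dd'0 : 0 <= d' - d by rewrite subr_ge0.
have sA := Ppi_stochastic kP hpi.
set V' := Vpi P r d' pi.
have PV'_ge0 t : 0 <= (Ppi P pi *m V') t 0.
  by apply: (stochastic_mulmx_ge _ sA) => j; case/andP: (Vpi_bounds hpi d'0 d'1 j).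
have PV'_le t : (Ppi P pi *m V') t 0 <= 1 / (1 - d').
  by apply: (stochastic_mulmx_le _ sA) => j; case/andP: (Vpi_bounds hpi d'0 d'1 j).
have D_fix t : (V' - Vpi P r d pi) t 0 =
    d * (Ppi P pi *m (V' - Vpi P r d pi)) t 0 + (d' - d) * (Ppi P pi *m V') t 0.
  by rewrite mulmxBr !cV_subE {1}(Vpi_fix hpi d'0 d'1 t) (Vpi_fix hpi d0 d1 t); lra.
rewrite -cV_subE; apply/andP; split.
  rewrite -(mul0r (1 - d)^-1); apply: (discounted_lb sA d0 d1) => t.
  by rewrite D_fix; have := mulr_ge0 dd'0 (PV'_ge0 t); lra.
apply: (le_trans (discounted_ub (c := (d' - d) / (1 - d')) sA d0 d1 _ s)) => [t|].
  by rewrite D_fix lerD2l ler_wpM2l // -div1r.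
have le_inv : (1 - d)^-1 <= (1 - d')^-1.
  by rewrite lef_pV2 ?posrE ?subr_gt0 // lerD2l lerN2.
rewrite expr2 invfM mulrA; apply: ler_wpM2l le_inv.
by rewrite divr_ge0 // subr_ge0 ltW.
Qed.

End DiscountedValue.

Section Perturbation.
Variables (R : realType) (m k : nat).
Variables (P : 'I_m.+1 -> 'I_k.+1 -> 'I_m.+1 -> R) (r : 'I_m.+1 -> 'I_k.+1 -> R).
Hypothesis kP : is_kernel P.
Variables (n : nat) (s0 : 'I_m.+1).
Hypothesis n_ge2 : (2 <= n)%N.
Implicit Types (pi : 'I_m.+1 -> 'I_k.+1 -> R) (x h : 'cV[R]_m.+1).

Lemma inv_n_bounds : 0 < n%:R^-1 :> R /\ 2 * n%:R^-1 <= 1 :> R.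
Proof.
have n_gt0 : 0 < n%:R :> R by rewrite ltr0n; exact: leq_trans n_ge2.
split; first by rewrite invr_gt0.
by rewrite -ler_pdivlMr ?invr_gt0 // mul1r invrK ler_nat.
Qed.

Lemma discount_bounds : 0 <= 1 - n%:R^-1 :> R /\ 1 - n%:R^-1 < 1 :> R.
Proof. by have [ni_gt0 ni_le] := inv_n_bounds; lra. Qed.

Lemma sum_indicator (F : 'I_m.+1 -> R) : \sum_s' (s' == s0)%:R * F s' = F s0.
Proof.
by rewrite (bigD1 s0) //= eqxx mul1r big1 ?addr0 // => s /negPf ->; rewrite mul0r.
Qed.

Lemma perturb_sumE s a h : \sum_s' perturb n s0 P s a s' * h s' 0 =
  (1 - n%:R^-1) * \sum_s' P s a s' * h s' 0 + n%:R^-1 * h s0 0.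
Proof.
rewrite -(sum_indicator (fun t => h t 0)) !mulr_sumr -big_split /=.
by apply: eq_bigr => s' _; rewrite /perturb; ring.
Qed.

Lemma perturb_kernel : is_kernel (perturb n s0 P).
Proof.
have [P0 P1] := kP; have [ni_gt0 ni_le] := inv_n_bounds.
split=> [s a s' | s a].
  by rewrite /perturb addr_ge0 ?mulr_ge0 ?ler0n //; lra.
have := perturb_sumE s a (const_mx 1).
under eq_bigr do rewrite mxE mulr1; under [X in _ = _ * X + _]eq_bigr do rewrite mxE mulr1.
by rewrite P1 mxE; lra.
Qed.

Lemma Ppi_perturb_mulmxE pi x s : is_policy pi ->
  (Ppi (perturb n s0 P) pi *m x) s 0 =
  (1 - n%:R^-1) * (Ppi P pi *m x) s 0 + n%:R^-1 * x s0 0.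
Proof.
case=> _ pi1; rewrite !Ppi_mulmxE; under eq_bigr do rewrite perturb_sumE.
rewrite (convex_combDr (pi1 s)) mulr_sumr; congr (_ + _).
by apply: eq_bigr => a _; rewrite mulrCA.
Qed.

(* Each restart at [s0] starts a fresh copy of the unperturbed process, and the
   expected discounted number of restarts is [beta / n + beta^2 / n + ...]. *)
Lemma Vpi_perturb beta pi : is_policy pi -> 0 <= beta -> beta < 1 -> forall s,
  Vpi (perturb n s0 P) r beta pi s 0 =
  Vpi P r (beta * (1 - n%:R^-1)) pi s 0
  + beta * n%:R^-1 / (1 - beta) * Vpi P r (beta * (1 - n%:R^-1)) pi s0 0.
Proof.
move=> hpi b0 b1; have [ni_gt0 ni_le] := inv_n_bounds.
have d0 : 0 <= beta * (1 - n%:R^-1) by rewrite mulr_ge0 //; lra.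
have d1 : beta * (1 - n%:R^-1) < 1 by nra.
set W := Vpi P r _ pi; set K := beta * n%:R^-1 / (1 - beta).
set X : 'cV[R]_m.+1 := \col_s (W s 0 + K * W s0 0).
have XE t : X t 0 = W t 0 + K * W s0 0 by rewrite mxE.
suff -> : Vpi (perturb n s0 P) r beta pi = X by [].
apply/esym/(discounted_resolventP _ _ (Ppi_stochastic perturb_kernel hpi) b0 b1) => s.
rewrite Ppi_perturb_mulmxE // (stochastic_mulmx_shift _ (Ppi_stochastic kP hpi) XE).
rewrite !XE {1}/W (Vpi_fix r kP hpi d0 d1 s) -/W.
have K1 : K * (1 - beta) = beta * n%:R^-1 by rewrite /K divfK // subr_eq0 gt_eqF.
have : K * W s0 0 * (1 - beta) = beta * n%:R^-1 * W s0 0 by rewrite mulrAC K1.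
lra.
Qed.

End Perturbation.

Lemma le0_of_le_one_sub (R : realType) (b y : R) : b < 1 ->
  (forall beta, b < beta -> beta < 1 -> y <= 1 - beta) -> y <= 0.
Proof.
move=> b1 y_le; rewrite leNgt; apply/negP => y_gt0.
have [b_le | b_gt] := lerP b (1 - y).
  by have := y_le (1 - y / 2); lra.
by have := y_le ((b + 1) / 2); lra.
Qed.

Section BlackwellOptimality.
Variables (R : realType) (m k : nat).
Variables (P : 'I_m.+1 -> 'I_k.+1 -> 'I_m.+1 -> R) (r : 'I_m.+1 -> 'I_k.+1 -> R).
Hypotheses (kP : is_kernel P) (r01 : forall s a, 0 <= r s a <= 1).
Variables (n : nat) (s0 : 'I_m.+1).
Hypothesis n_ge2 : (2 <= n)%N.
Variable pistar : 'I_m.+1 -> 'I_k.+1 -> R.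
Hypothesis bw : blackwell_optimal (perturb n s0 P) r pistar.

(* For [beta] close to 1, [pistar] cannot be improved in one step in the
   perturbed model; by [Vpi_perturb] this is the same as not being improvable
   in the original model at discount [beta (1 - 1/n)]. *)
Lemma blackwell_perturb_optimal : exists b, 0 <= b /\ b < 1 /\
  forall beta, b < beta -> beta < 1 -> forall p, is_policy p -> forall s,
    Vpi P r (beta * (1 - n%:R^-1)) p s 0 <= Vpi P r (beta * (1 - n%:R^-1)) pistar s 0.
Proof.
case: bw => hps [b [b0 [b1 bw_opt]]]; exists b; do 2!split=> //.
move=> beta b_beta beta1 p hp s.
have beta0 : 0 <= beta by lra.
have [ni_gt0 ni_le] := inv_n_bounds R n_ge2.
have d0 : 0 <= beta * (1 - n%:R^-1) by rewrite mulr_ge0 //; lra.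
have d1 : beta * (1 - n%:R^-1) < 1 by nra.
have eval_le := optimal_eval_le (perturb_kernel kP s0 n_ge2) hps beta0 beta1
  (bw_opt beta b_beta beta1) hp.
rewrite -[leRHS]addr0 -(mul0r (1 - beta * (1 - n%:R^-1))^-1).
apply: (Vpi_le_of_eval_le kP hps hp d0 d1) => t; have := eval_le t.
have VPu := Vpi_perturb r kP s0 n_ge2 hps beta0 beta1.
rewrite Ppi_perturb_mulmxE // (stochastic_mulmx_shift _ (Ppi_stochastic kP hp) VPu) !VPu.
set W := Vpi P r _ pistar; set K := beta * n%:R^-1 / (1 - beta).
have K1 : K * (1 - beta) = beta * n%:R^-1 by rewrite /K divfK // subr_eq0 gt_eqF.
have : K * W s0 0 * (1 - beta) = beta * n%:R^-1 * W s0 0 by rewrite mulrAC K1.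
lra.
Qed.

(* Let [beta] tend to 1 in [blackwell_perturb_optimal]; the value is Lipschitz
   in the discount by [Vpi_discount_diff]. *)
Lemma blackwell_gamma_optimal p : is_policy p -> forall s,
  Vpi P r (1 - n%:R^-1) p s 0 <= Vpi P r (1 - n%:R^-1) pistar s 0.
Proof.
move=> hp s; have hps : is_policy pistar by case: bw.
have [ni_gt0 ni_le] := inv_n_bounds R n_ge2.
have [b [b0 [b1 near_opt]]] := blackwell_perturb_optimal.
suff : (Vpi P r (1 - n%:R^-1) p s 0 - Vpi P r (1 - n%:R^-1) pistar s 0)
         * (n%:R^-1 * n%:R^-1) <= 0.
  by rewrite pmulr_lle0 ?mulr_gt0 // subr_le0.
apply: (le0_of_le_one_sub b1) => beta b_beta beta1.
have d0 : 0 <= beta * (1 - n%:R^-1) by rewrite mulr_ge0 //; lra.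
have dg : beta * (1 - n%:R^-1) <= 1 - n%:R^-1 by rewrite ler_piMl //; lra.
have [_ g1] := discount_bounds R n_ge2.
have near := near_opt beta b_beta beta1 p hp s.
have /andP[_ diff_p] := Vpi_discount_diff kP r01 hp d0 dg g1 s.
have /andP[diff_s _] := Vpi_discount_diff kP r01 hps d0 dg g1 s.
have sq : (1 - (1 - n%:R^-1)) ^+ 2 = n%:R^-1 * n%:R^-1 :> R by ring.
rewrite sq ler_pdivlMr ?mulr_gt0 // in diff_p.
have near_sq : (Vpi P r (beta * (1 - n%:R^-1)) p s 0 - Vpi P r (1 - n%:R^-1) pistar s 0)
                 * (n%:R^-1 * n%:R^-1) <= 0.
  by rewrite pmulr_lle0 ?mulr_gt0 //; lra.
have : 0 <= n%:R^-1 * (1 - beta) :> R by rewrite mulr_ge0 //; lra.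
lra.
Qed.

End BlackwellOptimality.

Lemma cvg_geometric_bound (R : realType) (u : nat -> R) (C g : R) : 0 <= g -> g < 1 ->
  (forall T, `|u T| <= C * g ^+ T) -> u @ \oo --> 0.
Proof.
move=> g0 g1 u_le.
have geo : (fun T => C * g ^+ T) @ \oo --> 0.
  rewrite -(mulr0 C); apply: cvgM; first exact: cvg_cst.
  by apply: cvg_expr; rewrite ger0_norm.
have ngeo : (fun T => - (C * g ^+ T)) @ \oo --> 0 by rewrite -oppr0; exact: cvgN.
apply: (squeeze_cvgr _ ngeo geo); apply: nearW => T.
by have := u_le T; rewrite ler_norml.
Qed.

Lemma cvg_clim (R : realType) (x : nat -> R) (l : R) : x @ \oo --> l -> clim x = l.
Proof.
move=> x_l; rewrite /clim.
have -> : cesaro_mean x = arithmetic_mean x.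
  by apply: funext => N; rewrite /cesaro_mean /arithmetic_mean /= seriesEord.
by apply: cvg_lim; [exact: Rhausdorff | exact: cesaro].
Qed.

Section GainBias.
Variables (R : realType) (m k : nat).
Variables (P : 'I_m.+1 -> 'I_k.+1 -> 'I_m.+1 -> R) (r : 'I_m.+1 -> 'I_k.+1 -> R).
Hypotheses (kP : is_kernel P) (r01 : forall s a, 0 <= r s a <= 1).
Variables (n : nat) (s0 : 'I_m.+1).
Hypothesis n_ge2 : (2 <= n)%N.
Variable pi : 'I_m.+1 -> 'I_k.+1 -> R.
Hypothesis hpi : is_policy pi.

Local Notation ni := (n%:R^-1 : R).
Local Notation g := (1 - n%:R^-1 : R).
Local Notation B := (g *: Ppi P pi).
Local Notation iM := (invmx (1%:M - g *: Ppi P pi)).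
Local Notation Q := (Ppi (perturb n s0 P) pi).
Implicit Types (x : 'cV[R]_m.+1).

Lemma cvg_mulmx_powB (N : 'M[R]_m.+1) x i : (forall j, `|x j 0| <= 1) ->
  (fun T => (N *m (B ^+ T *m x)) i 0) @ \oo --> 0.
Proof.
move=> x_le1; have [g0 g1] := discount_bounds R n_ge2.
apply: (cvg_geometric_bound (C := \sum_j `|N i j|) g0 g1) => T.
rewrite mxE (le_trans (ler_norm_sum _ _ _)) // mulr_suml ler_sum // => j _.
rewrite normrM ler_wpM2l // exprZn -scalemxAl mxE normrM ger0_norm ?exprn_ge0 //.
rewrite -[leRHS]mulr1 ler_wpM2l ?exprn_ge0 //.
exact: stochastic_pow_norm_le (Ppi_stochastic kP hpi) x_le1.
Qed.

Lemma sum_powB x T : \sum_(t < T) (B ^+ t *m x) = iM *m x - iM *m (B ^+ T *m x).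
Proof.
have [g0 g1] := discount_bounds R n_ge2.
have unitM := discounted_unitmx (Ppi_stochastic kP hpi) g0 g1.
rewrite -mulmxBr -[LHS](mulKmx unitM); congr (_ *m _).
elim: T => [|T IH]; first by rewrite big_ord0 mulmx0 expr0 mul1mx subrr.
rewrite big_ord_recr /= mulmxDr IH mulmxBl mul1mx exprS -mulmxE -!mulmxA.
by rewrite addrA subrK.
Qed.

Lemma perturb_pow_mulmxE x t s :
  (Q ^+ t *m x) s 0 = (B ^+ t *m x) s 0 + ni * \sum_(u < t) (B ^+ u *m x) s0 0.
Proof.
elim: t s => [|t IH] s; first by rewrite !expr0 !mul1mx big_ord0 mulr0 addr0.
rewrite exprS -mulmxE -mulmxA Ppi_perturb_mulmxE //.
rewrite (stochastic_mulmx_shift _ (Ppi_stochastic kP hpi) IH) IH big_ord_recr /=.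
have -> : (B ^+ t.+1 *m x) s 0 = g * (Ppi P pi *m (B ^+ t *m x)) s 0.
  by rewrite exprS -mulmxE -mulmxA -scalemxAl mxE.
ring.
Qed.

Lemma Qinf_perturb_mulmxE x s : (Qinf Q *m x) s 0 = ni * (iM *m x) s0 0.
Proof.
have Qinf_entry j : Qinf Q s j = ni * iM s0 j.
  set e : 'cV[R]_m.+1 := \col_l (l == j)%:R.
  have colE (X : 'M[R]_m.+1) i : (X *m e) i 0 = X i j.
    rewrite mxE (bigD1 j) //= mxE eqxx mulr1 big1 ?addr0 // => l /negPf lj.
    by rewrite mxE lj mulr0.
  have e_le1 l : `|e l 0| <= 1 by rewrite mxE; case: (l == j); rewrite ?normr1 ?normr0.
  rewrite mxE; apply: cvg_clim.
  under eq_fun do rewrite -colE perturb_pow_mulmxE -summxE sum_powB cV_subE.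
  have -> : ni * iM s0 j = 0 + ni * ((iM *m e) s0 0 - 0) by rewrite colE subr0 add0r.
  apply: cvgD; first by under eq_fun do rewrite -[B ^+ _ *m e]mul1mx; exact: cvg_mulmx_powB.
  apply: cvgM; first exact: cvg_cst.
  by apply: cvgB; [exact: cvg_cst | exact: cvg_mulmx_powB].
rewrite !mxE mulr_sumr; apply: eq_bigr => j _.
by rewrite Qinf_entry mulrA.
Qed.

Lemma gain_perturbE s : gain (perturb n s0 P) r pi s 0 = ni * Vpi P r g pi s0 0.
Proof. exact: Qinf_perturb_mulmxE. Qed.

Lemma bias_perturbE :
  exists c, forall s, bias (perturb n s0 P) r pi s 0 = Vpi P r g pi s 0 - c.
Proof.
set V := Vpi P r g pi; set b := rpi r pi.
have VE : iM *m b = V by [].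
have b_le1 j : `|b j 0| <= 1.
  by have /andP[b0 b1] := rpi_bounds r01 hpi j; rewrite ger0_norm.
exists (ni * (iM *m V) s0 0) => s; rewrite mxE; apply: cvg_clim.
have term t : (Q ^+ t *m b) s 0 - (Qinf Q *m b) s 0 =
    (B ^+ t *m b) s 0 - ni * (iM *m (B ^+ t *m b)) s0 0.
  by rewrite perturb_pow_mulmxE Qinf_perturb_mulmxE -summxE sum_powB cV_subE VE; ring.
have partial T : \sum_(t < T) ((Q ^+ t *m b) s 0 - (Qinf Q *m b) s 0) =
    V s 0 - ni * (iM *m V) s0 0
    - (iM *m (B ^+ T *m b)) s 0 + ni * (iM *m iM *m (B ^+ T *m b)) s0 0.
  under eq_bigr do rewrite term.
  rewrite sumrB -mulr_sumr -!summxE -mulmx_sumr sum_powB VE mulmxBr.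
  by rewrite [iM *m (iM *m (B ^+ T *m _))]mulmxA !cV_subE; ring.
under eq_fun do rewrite partial.
suff : (fun T => V s 0 - ni * (iM *m V) s0 0 - (iM *m (B ^+ T *m b)) s 0
                 + ni * (iM *m iM *m (B ^+ T *m b)) s0 0) @ \oo
       --> V s 0 - ni * (iM *m V) s0 0 - 0 + ni * 0.
  by rewrite subr0 mulr0 addr0.
apply: cvgD; first by apply: cvgB; [exact: cvg_cst | exact: cvg_mulmx_powB].
by apply: cvgM; [exact: cvg_cst | exact: cvg_mulmx_powB].
Qed.

End GainBias.

Section Norms.
Variables (R : realType) (m : nat).
Implicit Types x : 'cV[R]_m.+1.

Lemma supn_le x c : 0 <= c -> (forall s, `|x s 0| <= c) -> supn x <= c.
Proof. by move=> c0 xc; apply: bigmax_le. Qed.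

Lemma supn_ge x s : `|x s 0| <= supn x.
Proof. exact: le_bigmax. Qed.

Lemma spn_le x c : (forall s t, x s 0 - x t 0 <= c) -> spn x <= c.
Proof.
move=> xc; rewrite /spn lerBlDr.
have le_min s : x s 0 - c <= \big[Num.min/x ord0 0]_t x t 0.
  by apply: le_bigmin => [|t _]; [have := xc s ord0 | have := xc s t]; lra.
by apply: bigmax_le => [|s _]; [have := le_min ord0 | have := le_min s]; lra.
Qed.

Lemma spn_ge x s t : x s 0 - x t 0 <= spn x.
Proof.
apply: lerB; first exact: (le_bigmax _ (fun s => x s 0)).
exact: (bigmin_le _ _ (fun s => x s 0)).
Qed.

End Norms.

Section Regret.
Variables (R : realType) (m k : nat).
Variables (P : 'I_m.+1 -> 'I_k.+1 -> 'I_m.+1 -> R) (r : 'I_m.+1 -> 'I_k.+1 -> R).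
Hypotheses (kP : is_kernel P) (r01 : forall s a, 0 <= r s a <= 1).
Variables (n : nat) (s0 : 'I_m.+1) (pistar pi : 'I_m.+1 -> 'I_k.+1 -> R).
Hypotheses (n_ge2 : (2 <= n)%N) (bw : blackwell_optimal (perturb n s0 P) r pistar).
Hypothesis hpi : is_policy pi.

Local Notation Pu := (perturb n s0 P).
Local Notation ni := (n%:R^-1 : R).
Local Notation g := (1 - n%:R^-1 : R).
Local Notation V := (Vpi P r (1 - n%:R^-1) pi).
Local Notation Vs := (Vpi P r (1 - n%:R^-1) pistar).

Let hps : is_policy pistar. Proof. by case: bw. Qed.

Let sub_g : 1 - g = ni. Proof. by ring. Qed.

Lemma Vstar_gammaE s : Vstar P r g s 0 = Vs s 0.
Proof.
have opt := blackwell_gamma_optimal kP r01 n_ge2 bw.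
rewrite mxE; apply/le_anti/andP; split.
  by apply: ge_sup => [|_ [p hp <-]]; [exists (Vs s 0), pistar | exact: opt].
apply: ub_le_sup; last by exists pistar.
by exists (Vs s 0) => _ [p hp <-]; exact: opt.
Qed.

Lemma regret_supnP :
  supn (Vstar P r g - V) <= ni <-> forall s, Vs s 0 - V s 0 <= ni.
Proof.
have [ni_gt0 _] := inv_n_bounds R n_ge2.
have regretE s : `|(Vstar P r g - V) s 0| = Vs s 0 - V s 0.
  rewrite cV_subE Vstar_gammaE ger0_norm // subr_ge0.
  exact: (blackwell_gamma_optimal kP r01 n_ge2 bw hpi s).
split=> [supn_le s | regret_le].
  by rewrite -regretE; exact: le_trans (supn_ge _ s) supn_le.
by apply: supn_le => [|s]; [exact: ltW | rewrite regretE; exact: regret_le].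
Qed.

Lemma regret_le_of_greedy h :
  spn (bias Pu r pistar - h) <= (n%:R ^+ 2)^-1 ->
  greedy pi (fun s a => r s a + \sum_s' Pu s a s' * h s' 0) ->
  forall s, Vs s 0 - V s 0 <= ni.
Proof.
move=> spn_le greedy_pi s.
have [ni_gt0 _] := inv_n_bounds R n_ge2.
have [g0 g1] := discount_bounds R n_ge2.
have [cs bias_s] := bias_perturbE kP r01 s0 n_ge2 hps.
have close t t' : (h t 0 - Vs t 0) - (h t' 0 - Vs t' 0) <= ni * ni.
  have := le_trans (spn_ge _ t' t) spn_le.
  by rewrite !cV_subE !bias_s -exprVn expr2; lra.
have eval_le :=
  policy_eval_le_of_greedy (perturb_kernel kP s0 n_ge2) hps hpi greedy_pi close.
have one_step t : Vs t 0 + - (ni * ni) <= rpi r pi t 0 + g * (Ppi P pi *m Vs) t 0.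
  have := eval_le t; rewrite !Ppi_perturb_mulmxE //.
  by have := Vpi_fix r kP hps g0 g1 t; lra.
have := Vpi_ge_of_eval_ge kP hps hpi g0 g1 one_step s.
by rewrite sub_g mulNr mulfK ?gt_eqF //; lra.
Qed.

Lemma regret_le_of_bellman :
  (forall s, bellman Pu r (bias Pu r pi) s 0
             <= bias Pu r pi s 0 + gain Pu r pi s 0 + (n%:R ^+ 2)^-1) ->
  forall s, Vs s 0 - V s 0 <= ni.
Proof.
move=> bellman_le s.
have [ni_gt0 _] := inv_n_bounds R n_ge2.
have [g0 g1] := discount_bounds R n_ge2.
have [c bias_pi] := bias_perturbE kP r01 s0 n_ge2 hpi.
have one_step t : rpi r pistar t 0 + g * (Ppi P pistar *m V) t 0 <= V t 0 + ni * ni.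
  have := le_trans (policy_eval_le_bellman Pu r (bias Pu r pi) t hps) (bellman_le t).
  have sQ := Ppi_stochastic (perturb_kernel kP s0 n_ge2) hps.
  rewrite (stochastic_mulmx_shift _ sQ bias_pi) Ppi_perturb_mulmxE // bias_pi.
  by rewrite gain_perturbE // -exprVn expr2; lra.
have := Vpi_le_of_eval_le kP hpi hps g0 g1 one_step s.
by rewrite sub_g mulfK ?gt_eqF //; lra.
Qed.

Lemma regret_le_of_gain_bias :
  (forall s, gain Pu r pistar s 0 - (3 * n%:R ^+ 2)^-1 <= gain Pu r pi s 0) ->
  supn (bias Pu r pi - bias Pu r pistar) <= (3 * n%:R ^+ 2)^-1 ->
  forall s, Vs s 0 - V s 0 <= ni.
Proof.
move=> gain_ge supn_le s.
have [ni_gt0 ni_le] := inv_n_bounds R n_ge2.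
have [c bias_pi] := bias_perturbE kP r01 s0 n_ge2 hpi.
have [cs bias_s] := bias_perturbE kP r01 s0 n_ge2 hps.
have eps : (3 * n%:R ^+ 2)^-1 = ni * ni / 3 :> R by rewrite invfM -exprVn expr2 mulrC.
have bias_close t : `|(V t 0 - c) - (Vs t 0 - cs)| <= ni * ni / 3.
  by rewrite -eps -bias_pi -bias_s -cV_subE (le_trans (supn_ge _ t)).
have regret_s0 : ni * (Vs s0 0 - V s0 0) <= ni * (ni / 3).
  by have := gain_ge s0; rewrite !gain_perturbE // eps; lra.
rewrite ler_pM2l // in regret_s0.
have := ler_wpM2l (ltW ni_gt0) ni_le.
by have := bias_close s; have := bias_close s0; rewrite !ler_norml; lra.
Qed.

Lemma gain_bias_of_regret_le : (forall s, Vs s 0 - V s 0 <= ni) ->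
  (forall s, gain Pu r pistar s 0 - (n%:R ^+ 2)^-1 <= gain Pu r pi s 0) /\
  spn (bias Pu r pi - bias Pu r pistar) <= 2 / n%:R.
Proof.
move=> regret_le; have [ni_gt0 _] := inv_n_bounds R n_ge2.
have [c bias_pi] := bias_perturbE kP r01 s0 n_ge2 hpi.
have [cs bias_s] := bias_perturbE kP r01 s0 n_ge2 hps.
split=> [s | ].
  rewrite !gain_perturbE // -exprVn expr2.
  by have := ler_wpM2l (ltW ni_gt0) (regret_le s0); lra.
apply: spn_le => s t; rewrite !cV_subE !bias_pi !bias_s.
have := blackwell_gamma_optimal kP r01 n_ge2 bw hpi s.
by have := regret_le t; lra.
Qed.

End Regret.

Theorem mainTheorem19 (R : realType) (m k : nat)
  (P : 'I_m.+1 -> 'I_k.+1 -> 'I_m.+1 -> R) (r : 'I_m.+1 -> 'I_k.+1 -> R)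
  (n : nat) (s0 : 'I_m.+1) (pistar pi : 'I_m.+1 -> 'I_k.+1 -> R) :
  is_kernel P ->
  (forall s a, 0 <= r s a <= 1) ->
  (2 <= n)%N ->
  blackwell_optimal (perturb n s0 P) r pistar ->
  is_policy pi ->
  let Pu := perturb n s0 P in
  let gamma := 1 - n%:R^-1 in
  let rho_star := gain Pu r pistar in
  let h_star := bias Pu r pistar in
  let rho_pi := gain Pu r pi in
  let h_pi := bias Pu r pi in
  ((exists h : 'cV[R]_m.+1,
       spn (h_star - h) <= (n%:R ^+ 2)^-1 /\
       greedy pi (fun s a => r s a + \sum_s' Pu s a s' * h s' 0))
   \/ (forall s, (bellman Pu r h_pi) s 0 <= h_pi s 0 + rho_pi s 0 + (n%:R ^+ 2)^-1)
   \/ ((forall s, rho_star s 0 - (3 * n%:R ^+ 2)^-1 <= rho_pi s 0) /\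
       supn (h_pi - h_star) <= (3 * n%:R ^+ 2)^-1)
   -> supn (Vstar P r gamma - Vpi P r gamma pi) <= n%:R^-1)
  /\
  (supn (Vstar P r gamma - Vpi P r gamma pi) <= n%:R^-1 ->
     (forall s, rho_star s 0 - (n%:R ^+ 2)^-1 <= rho_pi s 0) /\
     spn (h_pi - h_star) <= 2 / n%:R).
Proof.
move=> kP r01 n_ge2 bw hpi Pu gamma rho_star h_star rho_pi h_pi.
rewrite {}/h_pi {}/rho_pi {}/h_star {}/rho_star {}/gamma {}/Pu.
have regretP := regret_supnP kP r01 n_ge2 bw hpi.
split=> [conditions | /regretP]; last exact: gain_bias_of_regret_le.
apply/regretP.
case: conditions => [[h [spn_le greedy_pi]] | [bellman_le | [gain_ge bias_le]]].
- exact: regret_le_of_greedy spn_le greedy_pi.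
- exact: regret_le_of_bellman bellman_le.
- exact: regret_le_of_gain_bias gain_ge bias_le.
Qed.
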